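(* Let $\ast$ be a continuous $t$-norm and let $\{(X_n,M_n,\ast)\}_{n\in\mathbb N}$ be a sequence of nonempty compact fuzzy metric spaces such that: (1) $\ast$ satisfies (TN1) and each $(M_n,\ast)$ is stationary; (2) there is a constant $C>0$ with $C\le\mathrm{diam}(X_n)$ for all $n$; (3) for every $0<\varepsilon<1$ there is $N(\varepsilon)\in\mathbb N$ with $\mathrm{Cov}(X_n,\varepsilon)\le N(\varepsilon)$ for all $n$. Then for every $0<\varepsilon<1$ there is a subsequence $\{X_{n_k}\}_k$ with $M_{GH}(X_{n_j},X_{n_k},t)>(1-\varepsilon)\ast(1-\varepsilon)$ for all $j,k\in\mathbb N$ and all $t>0$; consequently $\{(X_n,M_n,\ast)\}_n$ has a Cauchy subsequence with respect to $M_{GH}$.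
   Context: A continuous $t$-norm is a binary operation $\ast:[0,1]\times[0,1]\to[0,1]$ which is associative, commutative, continuous, satisfies $a\ast 1=a$, and is monotone. Property (TN1): $a-a\ast b\ge a\ast(1-b)$ for all $a,b\in[0,1]$. A fuzzy metric space $(X,M,\ast)$: $M:X\times X\times[0,\infty)\to[0,1]$ with, for all $x,y,z$ and $t,s>0$: (KM1) $M(x,y,0)=0$; (KM2) $M(x,y,t)=1$ for all $t>0$ iff $x=y$; (KM3) symmetry; (KM4) $M(x,y,t)\ast M(y,z,s)\le M(x,z,t+s)$; (KM5) $M(x,y,\cdot)$ left continuous on $[0,\infty)$. Non-Archimedean: $M(x,z,\max\{t,s\})\ge M(x,y,t)\ast M(y,z,s)$. $(M,\ast)$ is stationary if for each $x,y$ the function $t\mapsto M(x,y,t)$ is constant on $t>0$ (then we write $M(x,y)$); stationary fuzzy metrics are non-Archimedean. Balls $B(x,\varepsilon,t)=\{y:M(x,y,t)>1-\varepsilon\}$ generate the topology; ''compact'' refers to it. For stationary $M$, $\mathrm{diam}(X)=\inf\{M(x,y):x,y\in X\}$ and $\mathrm{Cov}(X,\varepsilon)$ is the minimal cardinality of $C\subseteq X$ with $X=\bigcup_{c\in C}\{y: M(c,y)>1-\varepsilon\}$. $H_M(A,B,t)=\min\{\inf_{a\in A}\sup_{b\in B}M(a,b,t),\ \inf_{b\in B}\sup_{a\in A}M(a,b,t)\}$. A fuzzy metric on the disjoint union $X\sqcup Y$ is admissible if it restricts to the given ones; $M_{GH}(X,Y,t)=\sup\{H_M(X,Y,t): M$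 admissible non-Archimedean fuzzy metric on $X\sqcup Y$ with $t$-norm $\ast\}$. A sequence is Cauchy w.r.t. $M_{GH}$ if for every $t>0$, $0<\varepsilon<1$ there is $n_0$ with $M_{GH}(X_n,X_m,t)>1-\varepsilon$ for all $n,m\ge n_0$. *)

From Stdlib Require List.
From mathcomp Require Import all_boot all_order all_algebra.
From mathcomp Require Import all_classical all_reals all_analysis.
Set Implicit Arguments. Unset Strict Implicit. Unset Printing Implicit Defensive.
Import Order.TTheory GRing.Theory Num.Theory.
Import numFieldNormedType.Exports.
Local Open Scope classical_set_scope.
Local Open Scope ring_scope.

Section FuzzyDefs.
Variable R : realType.

Definition unit_int (a : R) := 0 <= a <= 1.

Definition cont_tnorm (T : R -> R -> R) : Prop :=
  [/\ (forall a b, unit_int a -> unit_int b -> unit_int (T a b)),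
      ((forall a b c, unit_int a -> unit_int b -> unit_int c ->
          T a (T b c) = T (T a b) c) /\
      (forall a b, unit_int a -> unit_int b -> T a b = T b a)),
      (forall a, unit_int a -> T a 1 = a),
      (forall a b c d, unit_int a -> unit_int b -> unit_int c -> unit_int d ->
          a <= c -> b <= d -> T a b <= T c d) &
      {within [set p : (R * R)%type | unit_int p.1 /\ unit_int p.2],
         continuous (fun p : (R * R)%type => T p.1 p.2)} ].

Definition TN1 (T : R -> R -> R) : Prop :=
  forall a b, unit_int a -> unit_int b -> a - T a b >= T a (1 - b).

Definition fuzzy_metric (X : Type) (M : X -> X -> R -> R) (T : R -> R -> R) : Prop :=
  [/\ ((forall x y t, 0 <= t -> unit_int (M x y t)) /\
      (forall x y, M x y 0 = 0)),
      (forall x y, (forall t, 0 < t -> M x y t = 1) <-> x = y),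
      (forall x y t, 0 < t -> M x y t = M y x t),
      (forall x y z t s, 0 < t -> 0 < s -> T (M x y t) (M y z s) <= M x z (t + s)) &
      (forall x y t, 0 < t -> (fun s => M x y s) @ at_left t --> M x y t) ].

Definition non_archimedean (X : Type) (M : X -> X -> R -> R) (T : R -> R -> R) : Prop :=
  forall x y z t s, 0 < t -> 0 < s -> T (M x y t) (M y z s) <= M x z (Num.max t s).

Definition stationary (X : Type) (M : X -> X -> R -> R) : Prop :=
  forall x y t s, 0 < t -> 0 < s -> M x y t = M x y s.

Definition fball (X : Type) (M : X -> X -> R -> R) (x : X) (e t : R) : set X :=
  [set y | M x y t > 1 - e].

Definition fopen (X : Type) (M : X -> X -> R -> R) (U : set X) : Prop :=
  forall x, U x -> exists e t, 0 < e < 1 /\ 0 < t /\ fball M x e t `<=` U.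

Definition fcompact (X : Type) (M : X -> X -> R -> R) : Prop :=
  forall (I : Type) (U : I -> set X), (forall i, fopen M (U i)) ->
    setT `<=` \bigcup_i U i ->
    exists F : set I, finite_set F /\ setT `<=` \bigcup_(i in F) U i.

(* for stationary M, M(x,y) := M x y t for any t > 0 (we take t = 1) *)
Definition diam (X : Type) (M : X -> X -> R -> R) : R :=
  inf [set M x y 1 | x in [set: X] & y in [set: X]].

(* Cov(X, e): minimal cardinality of a covering set of centres
   (as an extended real, +oo if no finite covering exists) *)
Definition Cov (X : Type) (M : X -> X -> R -> R) (e : R) : \bar R :=
  ereal_inf [set ((size s)%:R)%:E | s in
     [set s : seq X | forall y, exists c, List.In c s /\ M c y 1 > 1 - e]].

(* Hausdorff fuzzy distance between the two halves of X ⊔ Y *)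
Definition H_M (X Y : Type) (M : (X + Y) -> (X + Y) -> R -> R) (t : R) : R :=
  Num.min (inf [set sup [set M (inl a) (inr b) t | b in [set: Y]] | a in [set: X]])
          (inf [set sup [set M (inl a) (inr b) t | a in [set: X]] | b in [set: Y]]).

Definition admissible (X Y : Type) (MX : X -> X -> R -> R) (MY : Y -> Y -> R -> R)
  (T : R -> R -> R) (M : (X + Y) -> (X + Y) -> R -> R) : Prop :=
  [/\ fuzzy_metric M T, non_archimedean M T,
      (forall a a' t, M (inl a) (inl a') t = MX a a' t) &
      (forall b b' t, M (inr b) (inr b') t = MY b b' t)].

Definition M_GH (X Y : Type) (MX : X -> X -> R -> R) (MY : Y -> Y -> R -> R)
  (T : R -> R -> R) (t : R) : R :=
  sup [set H_M M t | M in [set M | admissible MX MY T M]].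

Definition GH_cauchy (X : nat -> Type) (M : forall n, X n -> X n -> R -> R)
  (T : R -> R -> R) : Prop :=
  forall t e, 0 < t -> 0 < e < 1 ->
    exists n0, forall n m, (n0 <= n)%N -> (n0 <= m)%N ->
      M_GH (M n) (M m) T t > 1 - e.

End FuzzyDefs.

(* Fix [w < 1] with [T w w] close to [1].  The powers of [T w w] under the t-norm
   tend to [0]: their infimum would otherwise be an idempotent strictly between [0]
   and [1], which (TN1) forbids.  So finitely many powers cut the range [[C, 1]] of
   all closeness values into finitely many intervals.  Choosing [N]-nets in every
   space and recording, for each pair of net points, the interval of their closeness
   colours the spaces with finitely many colours, and some colour recurs infinitely
   often.  Two spaces of the same colour have nets whose closeness values agree up to
   one factor [T w w]; gluing the spaces along their nets, with matched centres at
   closeness [w], gives an admissible non-Archimedean fuzzy metric on the disjoint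
   union whose Hausdorff closeness is at least [T (1 - e) w].  A diagonal argument
   over [e = 1 / (k + 1)] yields the Cauchy subsequence. *)

From mathcomp Require Import all_boot all_order all_algebra.
From mathcomp Require Import all_classical all_reals all_analysis.
From mathcomp Require Import lra.
Import Order.TTheory GRing.Theory Num.Theory.
Import numFieldNormedType.Exports.
Local Open Scope classical_set_scope.
Local Open Scope ring_scope.
Set Implicit Arguments. Unset Strict Implicit.

Section WithinContinuity.
Variable R : realType.
Variable F : (R * R)%type -> R.
Variable S : set (R * R)%type.
Hypothesis cF : {within S, continuous F}.

Lemma within_continuous2_lt p : S p -> forall e : R, 0 < e ->
  exists2 d : R, 0 < d & forall q, S q -> `|p.1 - q.1| < d -> `|p.2 - q.2| < d ->
    `|F p - F q| < e.
Proof.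
move=> Sp e e0.
have : F @ within S (nbhs p) --> F p by rewrite (nbhs_subspace_in Sp); exact: cF.
move=> /cvgrPdist_lt/(_ e e0); rewrite near_withinE => /nbhs_ballP[d d0 Hd].
by exists d => // q Sq h1 h2; apply: Hd.
Qed.

Lemma within_continuous_section a : (forall t, 0 <= t <= 1 -> S (a, t)) ->
  {within `[0, 1], continuous (fun t : R => F (a, t))}.
Proof.
move=> Sa; rewrite continuous_subspace_in => x; rewrite inE /= => xI.
have x01 : 0 <= x <= 1 by move: xI; rewrite in_itv.
suff : (fun t : R => F (a, t)) @ within `[0, 1] (nbhs x) --> F (a, x).
  by rewrite nbhs_subspace_in.
apply/cvgrPdist_lt => e e0.
have [d d0 Hd] := within_continuous2_lt (Sa _ x01) e0.
rewrite near_withinE; apply/nbhs_ballP; exists d => // t /= xt tI.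
by apply: Hd; rewrite ?subrr ?normr0 //; apply: Sa; move: tI; rewrite /= in_itv.
Qed.

End WithinContinuity.

Section TNorm.
Variable R : realType.
Variable T : R -> R -> R.
Hypothesis tn : cont_tnorm T.
Implicit Types a b c d : R.

Lemma unit_int0 : unit_int (0 : R). Proof. by rewrite /unit_int lexx ler01. Qed.
Lemma unit_int1 : unit_int (1 : R). Proof. by rewrite /unit_int lexx ler01. Qed.
Lemma unit_int_ge0 a : unit_int a -> 0 <= a. Proof. by case/andP. Qed.
Lemma unit_int_le1 a : unit_int a -> a <= 1. Proof. by case/andP. Qed.

Lemma tnorm_unit a b : unit_int a -> unit_int b -> unit_int (T a b).
Proof. by case: tn => h _ _ _ _; apply: h. Qed.

Lemma tnormA a b c : unit_int a -> unit_int b -> unit_int c ->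
  T a (T b c) = T (T a b) c.
Proof. by case: tn => _ [h _] _ _ _; apply: h. Qed.

Lemma tnormC a b : unit_int a -> unit_int b -> T a b = T b a.
Proof. by case: tn => _ [_ h] _ _ _; apply: h. Qed.

Lemma tnorm1 a : unit_int a -> T a 1 = a.
Proof. by case: tn => _ _ h _ _; apply: h. Qed.

Lemma tnorm1l a : unit_int a -> T 1 a = a.
Proof. by move=> ua; rewrite tnormC ?tnorm1 //; exact: unit_int1. Qed.

Lemma le_tnorm a b c d : unit_int a -> unit_int b -> unit_int c -> unit_int d ->
  a <= c -> b <= d -> T a b <= T c d.
Proof. by case: tn => _ _ _ h _; apply: h. Qed.

Lemma le_tnorml a b c : unit_int a -> unit_int b -> unit_int c ->
  a <= b -> T a c <= T b c.
Proof. by move=> *; apply: le_tnorm. Qed.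

Lemma le_tnormr a b c : unit_int a -> unit_int b -> unit_int c ->
  b <= c -> T a b <= T a c.
Proof. by move=> *; apply: le_tnorm. Qed.

Lemma tnorm_lel a b : unit_int a -> unit_int b -> T a b <= a.
Proof.
by move=> ua ub; rewrite -{2}(tnorm1 ua); apply: le_tnormr; rewrite ?unit_int1 ?unit_int_le1.
Qed.

Lemma tnorm_ler a b : unit_int a -> unit_int b -> T a b <= b.
Proof. by move=> ua ub; rewrite tnormC //; exact: tnorm_lel. Qed.

Lemma tnorm_ge0 a b : unit_int a -> unit_int b -> 0 <= T a b.
Proof. by move=> ua ub; apply: unit_int_ge0; exact: tnorm_unit. Qed.

Lemma tnorm0 a : unit_int a -> T a 0 = 0.
Proof.
by move=> ua; apply/eqP; rewrite eq_le tnorm_ler ?tnorm_ge0 //; exact: unit_int0.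
Qed.

Lemma tnormACA a b c d : unit_int a -> unit_int b -> unit_int c -> unit_int d ->
  T (T a b) (T c d) = T (T a c) (T b d).
Proof.
move=> ua ub uc ud; have u := tnorm_unit.
by rewrite -tnormA ?u // (tnormA ub) // (tnormC ub) // -(tnormA uc) // tnormA ?u.
Qed.

Lemma tnorm_continuous :
  {within [set p : (R * R)%type | unit_int p.1 /\ unit_int p.2],
    continuous (fun p : (R * R)%type => T p.1 p.2)}.
Proof. by case: tn. Qed.

Lemma tnorm_near1 e : 0 < e -> exists2 d : R, 0 < d < 1 & 1 - e < T (1 - d) (1 - d).
Proof.
move=> e0.
have [r r0 Hr] :=
  within_continuous2_lt tnorm_continuous (p := (1, 1)) (conj unit_int1 unit_int1) e0.
pose d := Num.min (r / 2) 2^-1.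
have d0 : 0 < d by rewrite lt_min divr_gt0 //= invr_gt0.
have dhalf : d <= 2^-1 by rewrite ge_min lexx orbT.
have dr : d < r by apply: le_lt_trans (_ : d <= r / 2) _; rewrite ?ge_min ?lexx //; lra.
have ud : unit_int (1 - d) by apply/andP; split; lra.
exists d; first by apply/andP; split=> //; lra.
have near1 : `|1 - (1 - d)| < r by rewrite opprB addrC subrK ger0_norm ?ltW.
have := Hr (1 - d, 1 - d) (conj ud ud) near1 near1.
by rewrite /= tnorm1 ?unit_int1 // ltr_norml => /andP[_]; lra.
Qed.

(* Under (TN1), [T L (1 - L) = 0] for an idempotent [L]; by the intermediate value
   theorem [1 - L = T L t] for some [t], so [1 - L = T (T L L) t = T L (1 - L) = 0]
   unless [L <= 1 - L], where monotonicity already forces [L = 0]. *)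
Lemma TN1_idempotent L : TN1 T -> unit_int L -> T L L = L -> L = 0 \/ L = 1.
Proof.
move=> tn1 uL LL; have /andP[L_ge0 L_le1] := uL.
have [->|L_neq0] := eqVneq L 0; first by left.
have [->|L_neq1] := eqVneq L 1; first by right.
have L_gt0 : 0 < L by rewrite lt_def L_neq0.
have L_lt1 : L < 1 by rewrite lt_def eq_sym L_neq1.
have u1L : unit_int (1 - L) by apply/andP; split; lra.
have TL1L : T L (1 - L) = 0.
  by apply/eqP; rewrite eq_le tnorm_ge0 // andbT; have := tn1 L L uL uL; rewrite LL subrr.
have [le_L1L|lt_1LL] := leP L (1 - L).
  have : T L L <= T L (1 - L) by apply: le_tnormr.
  by rewrite LL TL1L leNgt L_gt0.
have [t t01 Tt] : exists2 t, t \in `[0, 1] & T L t = 1 - L.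
  apply: IVT => //; last by rewrite tnorm1 // tnorm0 // min_l ?max_r; lra.
  by apply: (within_continuous_section tnorm_continuous) => t t01; split.
have ut : unit_int t by move: t01; rewrite in_itv.
by move: TL1L; rewrite -Tt tnormA // LL Tt; lra.
Qed.

End TNorm.

Section TNormPower.
Variable R : realType.
Variable T : R -> R -> R.
Hypothesis tn : cont_tnorm T.
Variable w : R.
Hypothesis uw : unit_int w.

Fixpoint tpow (n : nat) : R := if n is n'.+1 then T w (tpow n') else 1.

Lemma tpow_unit n : unit_int (tpow n).
Proof. by elim: n => [|n IH] /=; [exact: unit_int1|exact: tnorm_unit]. Qed.

Lemma tpowD m n : T (tpow m) (tpow n) = tpow (m + n).
Proof.
elim: m => [|m IH] /=; first by rewrite tnorm1l //; exact: tpow_unit.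
by rewrite -tnormA ?IH //; exact: tpow_unit.
Qed.

Lemma tpowS_le n : tpow n.+1 <= tpow n.
Proof. exact: tnorm_ler (tpow_unit n). Qed.

(* The infimum of the powers is idempotent by continuity, hence [0] by [TN1_idempotent]. *)
Lemma tpow_small C : TN1 T -> w < 1 -> 0 < C -> exists n, tpow n < C.
Proof.
move=> tn1 w1 C0; apply/not_existsP => big.
have C_le n : C <= tpow n by rewrite leNgt; apply/negP => lt; apply: (big n).
pose L := inf (range tpow).
have ne : range tpow !=set0 by exists (tpow 0); exists 0%N.
have lb : has_lbound (range tpow) by exists 0 => _ [n _ <-]; exact: unit_int_ge0 (tpow_unit n).
have L_le n : L <= tpow n by apply: ge_inf => //; exists n.
have CL : C <= L by apply: lb_le_inf => // _ [n _ <-].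
have uL : unit_int L by apply/andP; split; [apply: le_trans CL; exact: ltW|exact: L_le 0%N].
have LL : T L L = L.
  apply/eqP; rewrite eq_le tnorm_lel //=; apply/ler_addgt0Pr => e e0.
  have [d d0 Hd] := within_continuous2_lt (tnorm_continuous tn) (p := (L, L)) (conj uL uL) e0.
  have [_ [n _ <-] lt_n] := inf_adherent d0 (conj ne lb).
  have near : `|L - tpow n| < d by rewrite ler0_norm ?subr_le0 ?L_le //; lra.
  have := Hd (tpow n, tpow n) (conj (tpow_unit n) (tpow_unit n)) near near.
  by rewrite /= tpowD ltr_norml => /andP[+ _]; have := L_le (n + n)%N; lra.
have [L0|L1] := TN1_idempotent tn tn1 uL LL; first by move: CL; rewrite L0; lra.
by have := L_le 1%N; rewrite /= tnorm1 // L1; lra.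
Qed.

Definition tpow_index (n0 : nat) (u : R) : nat :=
  find (fun j => tpow j.+1 < u) (iota 0 n0.+1).

Lemma tpow_indexP n0 u : tpow n0 < u -> u <= 1 ->
  let j := tpow_index n0 u in [/\ (j < n0.+1)%N, tpow j.+1 < u & u <= tpow j].
Proof.
move=> n0u u1 j.
have hasj : has (fun j => tpow j.+1 < u) (iota 0 n0.+1).
  apply/hasP; exists n0; first by rewrite mem_iota add0n ltnSn.
  exact: le_lt_trans (tpowS_le n0) n0u.
have j_lt : (j < n0.+1)%N by rewrite -(size_iota 0 n0.+1) -has_find.
split=> //; first by have := nth_find 0%N hasj; rewrite nth_iota.
case Ej: j => [|i] //; have i_lt : (i < n0.+1)%N by rewrite ltnW // -Ej.
have := @before_find _ 0%N (fun j => tpow j.+1 < u) (iota 0 n0.+1) i.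
rewrite -/(tpow_index n0 u) -/j Ej ltnSn nth_iota // add0n.
by move=> /(_ isT)/negbT; rewrite -leNgt.
Qed.

Lemma tpow_index_close n0 u v : tpow n0 < u -> u <= 1 -> tpow n0 < v -> v <= 1 ->
  tpow_index n0 u = tpow_index n0 v -> T w v <= u.
Proof.
move=> n0u u1 n0v v1 uv; have [_ ltu _] := tpow_indexP n0u u1.
have [_ _ lev] := tpow_indexP n0v v1; apply: le_trans _ (ltW ltu); rewrite uv /=.
have uv' : unit_int v.
  by apply/andP; split=> //; apply/(le_trans _ (ltW n0v))/unit_int_ge0/tpow_unit.
by apply: le_tnormr => //; exact: tpow_unit.
Qed.

End TNormPower.

Section StationaryFuzzyMetric.
Variable R : realType.
Variable T : R -> R -> R.
Variable X : Type.
Variable M : X -> X -> R -> R.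
Hypothesis fm : fuzzy_metric M T.
Hypothesis st : stationary M.

Lemma fuzzy_unit a b t : 0 <= t -> unit_int (M a b t).
Proof. by case: fm => [[h _]] _ _ _ _; apply: h. Qed.

Lemma fuzzy_unit1 a b : unit_int (M a b 1).
Proof. exact: fuzzy_unit ler01. Qed.

Lemma fuzzy_at0 a b : M a b 0 = 0.
Proof. by case: fm => [[_ h]] _ _ _ _; apply: h. Qed.

Lemma stationary1 a b t : 0 < t -> M a b t = M a b 1.
Proof. by move=> t0; apply: st. Qed.

Lemma fuzzy_sym a b : M a b 1 = M b a 1.
Proof. by case: fm => _ _ h _ _; apply: h. Qed.

Lemma fuzzy_refl a : M a a 1 = 1.
Proof. by case: fm => _ h _ _ _; have [_ /(_ erefl)/(_ 1 ltr01)] := h a a. Qed.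

Lemma fuzzy_eq a b : M a b 1 = 1 -> a = b.
Proof. by case: fm => _ h _ _ _ ab1; apply/(h a b) => t t0; rewrite stationary1. Qed.

Lemma fuzzy_tri a b c : T (M a b 1) (M b c 1) <= M a c 1.
Proof.
case: fm => _ _ _ h _; have := h a b c 1 1 ltr01 ltr01.
by rewrite (stationary1 a c (t := 1 + 1)) // addr_gt0.
Qed.

Lemma diam_le a b : diam M <= M a b 1.
Proof.
apply: ge_inf; last by exists a => //; exists b.
by exists 0 => _ [x _ [y _ <-]]; apply: unit_int_ge0; exact: fuzzy_unit1.
Qed.

End StationaryFuzzyMetric.

Section GlueCross.
Variable R : realType.
Variable T : R -> R -> R.
Hypothesis tn : cont_tnorm T.
Variables X Y : Type.
Variable mX : X -> X -> R.
Variable mY : Y -> Y -> R.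
Hypothesis umX : forall a b, unit_int (mX a b).
Hypothesis umY : forall a b, unit_int (mY a b).
Hypothesis mX_sym : forall a b, mX a b = mX b a.
Hypothesis mY_sym : forall a b, mY a b = mY b a.
Hypothesis mX_tri : forall a b c, T (mX a b) (mX b c) <= mX a c.
Hypothesis mY_tri : forall a b c, T (mY a b) (mY b c) <= mY a c.
Variable N : nat.
Hypothesis N_gt0 : (0 < N)%N.
Variable c : 'I_N -> X.
Variable d : 'I_N -> Y.
Variable w : R.
Hypothesis uw : unit_int w.
Hypothesis close_XY : forall i k, T (T w w) (mY (d i) (d k)) <= mX (c i) (c k).

(* [glue_cross a b] is the best route from [a] to a centre [c i], across to its
   partner [d i] at closeness [w], and on to [b]. *)
Definition glue_path a b (i : 'I_N) := T (T (mX a (c i)) w) (mY (d i) b).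
Definition glue_cross a b := \big[Num.max/0]_(i < N) glue_path a b i.

Local Hint Resolve umX umY uw unit_int0 unit_int1 : unitdb.
Local Hint Resolve tnorm_unit : unitdb.

Lemma glue_path_unit a b i : unit_int (glue_path a b i).
Proof. by rewrite /glue_path; auto with unitdb. Qed.
Local Hint Resolve glue_path_unit : unitdb.

Lemma glue_crossP a b : exists i, glue_cross a b = glue_path a b i.
Proof.
have ge0 i : 0 <= glue_path a b i by apply/unit_int_ge0/glue_path_unit.
rewrite /glue_cross.
have [i _ ->] := @eq_bigmax _ _ _ 0 (Ordinal N_gt0) xpredT _ erefl (fun i _ => ge0 i).
by exists i.
Qed.

Lemma glue_path_le a b i : glue_path a b i <= glue_cross a b.
Proof. exact: le_bigmax. Qed.

Lemma glue_cross_unit a b : unit_int (glue_cross a b).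
Proof. by have [i ->] := glue_crossP a b; exact: glue_path_unit. Qed.
Local Hint Resolve glue_cross_unit : unitdb.

Lemma glue_cross_le a b : glue_cross a b <= w.
Proof.
have [i ->] := glue_crossP a b; rewrite /glue_path.
by apply: le_trans (tnorm_lel _ _ _) _; auto with unitdb; apply: tnorm_ler; auto with unitdb.
Qed.

Lemma glue_tri_left a a' b : T (mX a a') (glue_cross a' b) <= glue_cross a b.
Proof.
have [i ->] := glue_crossP a' b; apply: le_trans (glue_path_le a b i); rewrite /glue_path.
rewrite !(tnormA tn (umX a a')); auto with unitdb.
by apply: le_tnorml; auto with unitdb; apply: le_tnorml; auto with unitdb.
Qed.

Lemma glue_tri_right a b b' : T (glue_cross a b) (mY b b') <= glue_cross a b'.
Proof.
have [i ->] := glue_crossP a b; apply: le_trans (glue_path_le a b' i); rewrite /glue_path.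
by rewrite -tnormA; auto with unitdb; apply: le_tnormr; auto with unitdb.
Qed.

(* Two paths [a -> c i ~ d i -> b] and [a' -> c k ~ d k -> b] combine into
   [a -> c i -> c k -> a'], using [close_XY i k] to cross back. *)
Lemma glue_tri_cross a a' b : T (glue_cross a b) (glue_cross a' b) <= mX a a'.
Proof.
have [i ->] := glue_crossP a b; have [k ->] := glue_crossP a' b; rewrite /glue_path.
have regroup : T (T (T (mX a (c i)) w) (mY (d i) b)) (T (T (mX a' (c k)) w) (mY (d k) b)) =
    T (mX a (c i)) (T (T (T w w) (T (mY (d i) b) (mY (d k) b))) (mX a' (c k))).
  rewrite (tnormACA tn (a := T _ w)); auto with unitdb.
  rewrite (tnormACA tn (a := mX a _)); auto with unitdb.
  rewrite -(tnormA tn (a := T _ _)); auto with unitdb.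
  by rewrite -tnormA ?(tnormC tn (a := mX a' _)); auto with unitdb.
rewrite regroup; apply: le_trans (mX_tri a (c i) a'); apply: le_tnormr; auto with unitdb.
apply: le_trans (mX_tri (c i) (c k) a'); rewrite (mX_sym a').
apply: le_tnorml; auto with unitdb; apply: le_trans (close_XY i k).
by apply: le_tnormr; auto with unitdb; rewrite (mY_sym (d k)); apply: mY_tri.
Qed.

End GlueCross.

Lemma glue_cross_swap (R : realType) (T : R -> R -> R) (X Y : Type)
    (mX : X -> X -> R) (mY : Y -> Y -> R) N (c : 'I_N -> X) (d : 'I_N -> Y) w :
  cont_tnorm T -> (forall a b, unit_int (mX a b)) -> (forall a b, unit_int (mY a b)) ->
  (forall a b, mX a b = mX b a) -> (forall a b, mY a b = mY b a) -> unit_int w ->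
  forall a b, glue_cross T mY mX d c w b a = glue_cross T mX mY c d w a b.
Proof.
move=> tn uX uY sX sY uw a b; apply: eq_bigr => i _; rewrite /glue_path sX sY.
have u := tnorm_unit tn.
by rewrite (tnormC tn (a := T (mY _ _) w)) ?u // (tnormC tn (a := mY _ _)) // tnormA.
Qed.

Lemma H_M_le_M_GH (R : realType) (T : R -> R -> R) (X Y : Type)
    (MX : X -> X -> R -> R) (MY : Y -> Y -> R -> R) (M : X + Y -> X + Y -> R -> R) t :
  0 < t -> admissible MX MY T M -> inhabited X -> inhabited Y ->
  H_M M t <= M_GH MX MY T t.
Proof.
move=> t0 adm [x0] [y0]; apply: sup_upper_bound; last by exists M.
split; first by exists (H_M M t); exists M.
exists 1 => _ [M' [fm' _ _ _] <-]; rewrite /H_M ge_min; apply/orP; left.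
set A := [set _ | a in _].
have [lb|nlb] := pselect (has_lbound A); last by rewrite inf_out ?ler01 // => -[_ /nlb].
apply: le_trans (ge_inf lb (_ : A (sup [set M' (inl x0) (inr b) t | b in [set: Y]]))) _.
  by exists x0.
apply: ge_sup; first by exists (M' (inl x0) (inr y0) t); exists y0.
by move=> _ [b _ <-]; apply/unit_int_le1/(fuzzy_unit fm')/ltW.
Qed.

Section Glue.
Variable R : realType.
Variable T : R -> R -> R.
Hypothesis tn : cont_tnorm T.
Variables X Y : Type.
Variable MX : X -> X -> R -> R.
Variable MY : Y -> Y -> R -> R.
Hypothesis fX : fuzzy_metric MX T.
Hypothesis fY : fuzzy_metric MY T.
Hypothesis sX : stationary MX.
Hypothesis sY : stationary MY.
Variable N : nat.
Hypothesis N_gt0 : (0 < N)%N.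
Variable c : 'I_N -> X.
Variable d : 'I_N -> Y.
Variable w : R.
Hypothesis uw : unit_int w.
Hypothesis w_lt1 : w < 1.
Let mX a b := MX a b 1.
Let mY a b := MY a b 1.
Hypothesis close_XY : forall i k, T (T w w) (mY (d i) (d k)) <= mX (c i) (c k).
Hypothesis close_YX : forall i k, T (T w w) (mX (c i) (c k)) <= mY (d i) (d k).

Let umX a b : unit_int (mX a b) := fuzzy_unit1 fX a b.
Let umY a b : unit_int (mY a b) := fuzzy_unit1 fY a b.
Let smX a b : mX a b = mX b a := fuzzy_sym fX a b.
Let smY a b : mY a b = mY b a := fuzzy_sym fY a b.
Let tmX a b c : T (mX a b) (mX b c) <= mX a c := fuzzy_tri fX sX a b c.
Let tmY a b c : T (mY a b) (mY b c) <= mY a c := fuzzy_tri fY sY a b c.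

Let cross a b := glue_cross T mX mY c d w a b.

Let cross_unit a b : unit_int (cross a b) := glue_cross_unit tn umX umY N_gt0 c d uw a b.

Definition glue_value (p q : X + Y) : R :=
  match p, q with
  | inl a, inl a' => mX a a'
  | inr b, inr b' => mY b b'
  | inl a, inr b | inr b, inl a => cross a b
  end.

Definition glue_metric (p q : X + Y) (s : R) : R :=
  match p, q with
  | inl a, inl a' => MX a a' s
  | inr b, inr b' => MY b b' s
  | inl a, inr b | inr b, inl a => if 0 < s then cross a b else 0
  end.

Lemma glue_metric_pos p q s : 0 < s -> glue_metric p q s = glue_value p q.
Proof.
by move=> s0; case: p => [a|b]; case: q => [a'|b'] /=; rewrite ?s0 // stationary1.
Qed.

Lemma glue_value_tri p q r : T (glue_value p q) (glue_value q r) <= glue_value p r.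
Proof.
case: p => [a|b]; case: q => [a'|b']; case: r => [a''|b''] /=.
- exact: tmX.
- exact: (glue_tri_left tn).
- exact: (glue_tri_cross tn).
- exact: (glue_tri_right tn).
- by rewrite (tnormC tn) // smX; exact: (glue_tri_left tn).
- have := glue_tri_cross tn umY umX smY smX tmY tmX N_gt0 uw close_YX b b'' a'.
  by rewrite !(glue_cross_swap _ _ tn umX umY smX smY uw).
- by rewrite (tnormC tn) // smY; exact: (glue_tri_right tn).
- exact: tmY.
Qed.

Lemma glue_cross_lt1 a b : cross a b < 1.
Proof. exact: le_lt_trans (glue_cross_le tn umX umY N_gt0 c d uw a b) w_lt1. Qed.

Lemma glue_fuzzy_metric : fuzzy_metric glue_metric T.
Proof.
split.
- split=> [p q t t0|p q].
    case: p => [a|b]; case: q => [a'|b'] /=;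
      [exact: (fuzzy_unit fX)| | |exact: (fuzzy_unit fY)];
      by case: (0 < t); rewrite ?unit_int0.
  by case: p => [a|b]; case: q => [a'|b'] /=; rewrite ?ltxx ?(fuzzy_at0 fX) ?(fuzzy_at0 fY).
- move=> p q; split=> [pq|-> t t0]; last first.
    rewrite glue_metric_pos //.
    by case: q => a /=; [exact: (fuzzy_refl fX)|exact: (fuzzy_refl fY)].
  move: {pq}(pq 1 ltr01); rewrite glue_metric_pos //.
  case: p => [a|b]; case: q => [a'|b'] /=.
  + by move/(fuzzy_eq fX) => ->.
  + by move=> e; have := glue_cross_lt1 a b'; rewrite e ltxx.
  + by move=> e; have := glue_cross_lt1 a' b; rewrite e ltxx.
  + by move/(fuzzy_eq fY) => ->.
- move=> p q t t0; rewrite !glue_metric_pos //.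
  by case: p => a; case: q => b /=; [exact: smX| | |exact: smY].
- by move=> p q r t s t0 s0; rewrite !glue_metric_pos ?addr_gt0 //; exact: glue_value_tri.
- move=> p q t t0; apply: cvg_near_cst; apply: filterS (nbhs_left_gt t0) => s s0.
  by rewrite !glue_metric_pos.
Qed.

Lemma glue_admissible : admissible MX MY T glue_metric.
Proof.
split=> //; first exact: glue_fuzzy_metric.
by move=> p q r t s t0 s0; rewrite !glue_metric_pos ?lt_max ?t0 //; exact: glue_value_tri.
Qed.

(* Every point of [X] is [T r w]-close to the partner of its nearest centre. *)
Lemma H_M_glue_ge r t : 0 < t -> unit_int r ->
  (forall a, exists i, r <= mX a (c i)) -> (forall b, exists i, r <= mY (d i) b) ->
  inhabited X -> inhabited Y -> T r w <= H_M glue_metric t.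
Proof.
move=> t0 ur cX cY [x0] [y0]; rewrite /H_M le_min; apply/andP; split.
- apply: lb_le_inf; first by eexists; exists x0.
  move=> _ [a _ <-]; have [i ri] := cX a.
  apply: (@le_trans _ _ (cross a (d i))).
    apply: le_trans (glue_path_le T mX mY c d w _ _ i).
    by rewrite /glue_path /mY (fuzzy_refl fY) tnorm1 ?tnorm_unit //; apply: le_tnorml.
  apply: sup_upper_bound; last by exists (d i) => //; rewrite glue_metric_pos.
  split; first by eexists; exists (d i).
  by exists 1 => _ [b _ <-]; rewrite glue_metric_pos //; apply/unit_int_le1/cross_unit.
- apply: lb_le_inf; first by eexists; exists y0.
  move=> _ [b _ <-]; have [i ri] := cY b.
  apply: (@le_trans _ _ (cross (c i) b)).
    apply: le_trans (glue_path_le T mX mY c d w _ _ i).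
    by rewrite /glue_path /mX (fuzzy_refl fX) tnorm1l // (tnormC tn) //; apply: le_tnormr.
  apply: sup_upper_bound; last by exists (c i) => //; rewrite glue_metric_pos.
  split; first by eexists; exists (c i).
  by exists 1 => _ [a _ <-]; rewrite glue_metric_pos //; apply/unit_int_le1/cross_unit.
Qed.

Lemma M_GH_ge_of_nets r t : 0 < t -> unit_int r ->
  (forall a, exists i, r <= mX a (c i)) -> (forall b, exists i, r <= mY (d i) b) ->
  inhabited X -> inhabited Y -> T r w <= M_GH MX MY T t.
Proof.
move=> t0 ur cX cY iX iY; apply: le_trans (H_M_le_M_GH t0 glue_admissible iX iY).
exact: H_M_glue_ge.
Qed.

End Glue.

Lemma In_nth (X : Type) (x0 x : X) (s : seq X) :
  List.In x s -> exists2 i, (i < size s)%N & nth x0 s i = x.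
Proof.
elim: s => [|y s IH] //= [->|/IH[i lt_i <-]]; first by exists 0%N.
by exists i.+1.
Qed.

Lemma Cov_net (R : realType) (X : Type) (M : X -> X -> R -> R) e (N : nat) :
  inhabited X -> (Cov M e <= N%:R%:E)%E ->
  exists c : 'I_N -> X, forall y, exists i, 1 - e < M (c i) y 1.
Proof.
move=> [x0] CovN; have : (Cov M e < N.+1%:R%:E)%E.
  by apply: le_lt_trans CovN _; rewrite lte_fin ltr_nat.
move=> /ereal_inf_lt[_ [s cover <-]]; rewrite lte_fin ltr_nat ltnS => sN.
exists (fun i => nth x0 s i) => y; have [c0 [c0s c0y]] := cover y.
have [i i_lt c0E] := In_nth x0 c0s.
by exists (Ordinal (leq_trans i_lt sN)); rewrite /= c0E.
Qed.

Lemma pigeonhole_inf (S : finType) (f : nat -> S) :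
  exists s, forall n, exists2 m, (n <= m)%N & f m = s.
Proof.
apply/not_existsP => none.
have finite s : exists n, forall m, (n <= m)%N -> f m != s.
  apply/not_existsP => inf; apply: (none s) => n.
  by have /existsNP[m /not_implyP[nm /negP/negbNE/eqP fms]] := inf n; exists m.
pose B s := projT1 (cid (finite s)).
pose K := (\max_(s : S) B s)%N.
have := projT2 (cid (finite (f K))) K.
by rewrite -/(B (f K)) leq_bigmax eqxx => /(_ isT).
Qed.

Lemma infinite_subseq (P : nat -> Prop) : (forall n, exists2 m, (n <= m)%N & P m) ->
  exists2 phi : nat -> nat, (forall k, (phi k < phi k.+1)%N) & forall k, P (phi k).
Proof.
move=> infP; pose next n := projT1 (cid2 (infP n)).
have nextP n : (n <= next n)%N /\ P (next n) by rewrite /next; case: cid2.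
pose fix phi k := if k is k'.+1 then next (phi k').+1 else next 0%N.
by exists phi => [k|[|k]] /=; [exact: (nextP _).1|exact: (nextP _).2|exact: (nextP _).2].
Qed.

Lemma leq_incr (f : nat -> nat) : (forall i, (f i < f i.+1)%N) -> forall i, (i <= f i)%N.
Proof. by move=> f_incr; elim=> [//|i IH]; apply: leq_ltn_trans IH (f_incr i). Qed.

(* Cantor's diagonal argument: [psi k.+1] is a subsequence of [psi k] on which the
   [k]-th property holds, and the diagonal [psi n n] is eventually inside each [psi k]. *)
Lemma diagonal_subseq (P : nat -> nat -> nat -> Prop) :
  (forall k (g : nat -> nat), exists2 phi : nat -> nat,
     (forall i, (phi i < phi i.+1)%N) & forall i j, P k (g (phi i)) (g (phi j))) ->
  exists2 D : nat -> nat, (forall i, (D i < D i.+1)%N) &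
    forall k i j, (k < i)%N -> (k < j)%N -> P k (D i) (D j).
Proof.
move=> extract; pose phi k g := s2val (cid2 (extract k g)).
have phi_incr k g i : (phi k g i < phi k g i.+1)%N by rewrite /phi; case: cid2.
have phiP k g i j : P k (g (phi k g i)) (g (phi k g j)) by rewrite /phi; case: cid2.
pose fix psi k := if k is k'.+1 then psi k' \o phi k' (psi k') else id.
have psi_homo k : {homo psi k : i j / (i < j)%N}.
  elim: k => [//|k IH] i j ij /=; apply: IH.
  exact: (homo_ltn ltn_trans (phi_incr k (psi k))).
have psi_sub k n i : (k <= n)%N -> exists r, psi n i = psi k r.
  elim: n i => [|n IH] i; first by rewrite leqn0 => /eqP ->; exists i.
  rewrite leq_eqVlt ltnS => /predU1P[->|/IH sub]; first by exists i.
  exact: sub.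
exists (fun n => psi n n) => [n|k i j ki kj] /=.
  by apply: psi_homo; apply: leq_incr.
have [r ->] := psi_sub k.+1 i i ki; have [r' ->] := psi_sub k.+1 j j kj.
exact: phiP.
Qed.

Unset Implicit Arguments.

Section UniformCovering.
Variable R : realType.
Variable T : R -> R -> R.
Hypothesis tn : cont_tnorm T.
Hypothesis tn1 : TN1 T.
Variable X : nat -> Type.
Variable M : forall n, X n -> X n -> R -> R.
Hypothesis inh : forall n, inhabited (X n).
Hypothesis fm : forall n, fuzzy_metric (M n) T.
Hypothesis st : forall n, stationary (M n).
Variable C : R.
Hypothesis C_gt0 : 0 < C.
Hypothesis C_diam : forall n, C <= diam (M n).
Hypothesis Cov_bounded : forall e, 0 < e < 1 ->
  exists N : nat, forall n, (Cov (M n) e <= N%:R%:E)%E.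

Lemma M_unit1 n (x y : X n) : unit_int (M n x y 1).
Proof. exact: fuzzy_unit1 (fm n) x y. Qed.

Lemma C_le_M n (x y : X n) : C <= M n x y 1.
Proof. exact: le_trans (C_diam n) (diam_le (fm n) x y). Qed.

Lemma M_GH_close_subseq eps : 0 < eps -> forall g : nat -> nat,
  exists2 phi : nat -> nat, (forall i, (phi i < phi i.+1)%N) &
    forall i j t, 0 < t -> 1 - eps < M_GH (M (g (phi i))) (M (g (phi j))) T t.
Proof.
move=> eps0 g; have [e e01 eps_lt] := tnorm_near1 tn eps0; have /andP[e0 e1] := e01.
pose w := 1 - e; have uw : unit_int w by apply/andP; rewrite /w; split; lra.
have w_lt1 : w < 1 by rewrite /w; lra.
pose ww := T w w; have uww : unit_int ww by exact: tnorm_unit.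
have ww_lt1 : ww < 1 := le_lt_trans (tnorm_lel tn uw uw) w_lt1.
have [n0 n0C] := tpow_small tn uww tn1 ww_lt1 C_gt0.
have [N CovN] := Cov_bounded e e01.
pose net n := projT1 (cid (Cov_net (inh n) (CovN n))).
have netP n y : exists i, 1 - e < M n (net n i) y 1.
  exact: projT2 (cid (Cov_net (inh n) (CovN n))) y.
have N_gt0 : (0 < N)%N.
  by case: (inh 0%N) => y; have [i _] := netP 0%N y; exact: leq_ltn_trans (ltn_ord i).
pose colour n : {ffun 'I_N * 'I_N -> 'I_n0.+1} :=
  [ffun p => inord (tpow_index T ww n0 (M n (net n p.1) (net n p.2) 1))].
have same_colour n m i k : colour n = colour m ->
    T ww (M m (net m i) (net m k) 1) <= M n (net n i) (net n k) 1.
  move=> /(congr1 (fun f : {ffun 'I_N * 'I_N -> 'I_n0.+1} => val (f (i, k)))).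
  rewrite !ffunE /=.
  have bounds p x y : tpow T ww n0 < M p x y 1 /\ M p x y 1 <= 1.
    by split; [exact: lt_le_trans n0C (C_le_M p x y)|exact: unit_int_le1 (M_unit1 p x y)].
  have [nl nu] := bounds n (net n i) (net n k); have [ml mu] := bounds m (net m i) (net m k).
  have [n_lt _ _] := tpow_indexP tn uww nl nu; have [m_lt _ _] := tpow_indexP tn uww ml mu.
  by rewrite !inordK //; exact: (tpow_index_close tn uww nl nu ml mu).
have [s colour_s] := pigeonhole_inf (colour \o g).
have [phi phi_incr phi_s] := infinite_subseq colour_s.
exists phi => // i j t t0; apply: lt_le_trans eps_lt _.
have ij : colour (g (phi i)) = colour (g (phi j)) by rewrite [LHS]phi_s [RHS]phi_s.
apply: (M_GH_ge_of_nets tn (fm _) (fm _) (st _) (st _) N_gt0 (c := net _) (d := net _) uw w_lt1)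
  => //.
- by move=> i' k'; apply: same_colour ij.
- by move=> i' k'; apply: same_colour (esym ij).
- by move=> x; have [i' lt] := netP (g (phi i)) x; exists i'; rewrite (fuzzy_sym (fm _)) ltW.
- by move=> y; have [i' lt] := netP (g (phi j)) y; exists i'; rewrite ltW.
Qed.

End UniformCovering.

Theorem mainTheorem10 (R : realType) (T : R -> R -> R)
  (X : nat -> Type) (M : forall n, X n -> X n -> R -> R) :
  cont_tnorm T ->
  (forall n, inhabited (X n)) ->
  (forall n, fuzzy_metric (M n) T) ->
  (forall n, fcompact (M n)) ->
  TN1 T ->
  (forall n, stationary (M n)) ->
  (exists C : R, 0 < C /\ forall n, C <= diam (M n)) ->
  (forall e : R, 0 < e < 1 -> exists N : nat,
      forall n, (Cov (M n) e <= (N%:R)%:E)%E) ->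
  (forall e : R, 0 < e < 1 -> exists phi : nat -> nat,
      (forall k, (phi k < phi k.+1)%N) /\
      forall j k t, 0 < t ->
        M_GH (M (phi j)) (M (phi k)) T t > T (1 - e) (1 - e))
  /\
  (exists phi : nat -> nat, (forall k, (phi k < phi k.+1)%N) /\
      GH_cauchy (fun k => M (phi k)) T).
Proof.
move=> tn inh fm _ tn1 st [C [C_gt0 C_diam]] Cov_bounded.
have close := M_GH_close_subseq R T tn tn1 X M inh fm st C C_gt0 C_diam Cov_bounded.
split.
  move=> e /andP[e0 e1]; have [phi phi_incr phi_close] := close e e0 id.
  exists phi; split=> // j k t t0; apply: le_lt_trans _ (phi_close j k t t0).
  have ue : unit_int (1 - e) by apply/andP; split; lra.
  exact (tnorm_lel tn ue ue).
pose P k a b := forall t, 0 < t -> 1 - k.+1%:R^-1 < M_GH (M a) (M b) T t.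
have inv_gt0 k : 0 < k.+1%:R^-1 :> R by rewrite invr_gt0 ltr0n.
have [D D_incr D_close] := @diagonal_subseq P (fun k => close _ (inv_gt0 k)).
exists D; split=> // t e t0 /andP[e0 _].
have [k] := @ltr_add_invr R 0 e e0; rewrite add0r => ke.
exists k.+1 => n m kn km; apply: lt_trans (D_close k n m kn km t t0).
by rewrite ltrD2l ltrN2.
Qed.
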